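(* Let $X$ be a Tychonoff space and $\beta X$ its Čech–Stone compactification. (a) If $|\beta X\setminus X|=1$, then $\mathsf{EC}(X,\mathbb{R})$ holds. (b) If $\beta X\setminus X$ is at most countable and $X$ is locally compact, then $\mathsf{L}(X,\mathbb{R})$ holds.
   Context: All spaces are Hausdorff and maps continuous. For a non-Lindelöf space $X$ and a space $Y$: $\mathsf{EC}(X,Y)$ means that for every continuous $f:X\to Y$ there is a Lindelöf $Z\subset X$ with $f(X\setminus Z)$ a singleton; $\mathsf{L}(X,Y)$ means that for every continuous $f:X\to Y$ there is a Lindelöf $Z\subset X$ with $f(Z)=f(X)$. (For Lindelöf $X$ these properties are regarded as trivially true.) *)

From HB Require Import structures.
From mathcomp Require Import all_boot all_order all_algebra.
From mathcomp Require Import all_classical all_reals all_analysis.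
From mathcomp Require Import Rstruct Rstruct_topology.
Set Implicit Arguments. Unset Strict Implicit. Unset Printing Implicit Defensive.
Import Order.TTheory GRing.Theory Num.Theory.
Local Open Scope classical_set_scope.

Definition completely_regular (X : topologicalType) : Prop :=
  forall (C : set X) (x : X), closed C -> ~ C x ->
    exists f : X -> Rdefinitions.R, continuous f /\ f x = 0%R /\
      (forall y, C y -> f y = 1%R).

Definition tychonoff_space (X : topologicalType) : Prop :=
  completely_regular X /\ hausdorff_space X.

Definition lindelof (X : topologicalType) (A : set X) : Prop :=
  forall (I : Type) (U : I -> set X), (forall i, open (U i)) ->
    A `<=` \bigcup_(i in [set: I]) U i ->
    exists J : set I, countable J /\ A `<=` \bigcup_(i in J) U i.

(* EC(X,Y) (trivially true for Lindelöf X). *)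
Definition EC (X Y : topologicalType) : Prop :=
  ~ lindelof [set: X] ->
  forall f : X -> Y, continuous f ->
    exists Z : set X, lindelof Z /\ exists y : Y, f @` (~` Z) = [set y].

(* L(X,Y) (trivially true for Lindelöf X). *)
Definition Lprop (X Y : topologicalType) : Prop :=
  ~ lindelof [set: X] ->
  forall f : X -> Y, continuous f ->
    exists Z : set X, lindelof Z /\ f @` Z = f @` [set: X].

Definition embedding (X K : topologicalType) (e : X -> K) : Prop :=
  continuous e /\ injective e /\
  forall U : set X, open U ->
    exists V : set K, open V /\ e @` U = range e `&` V.

Definition is_stone_cech (X K : topologicalType) (e : X -> K) : Prop :=
  compact [set: K] /\ hausdorff_space K /\ embedding e /\ dense (range e) /\
  forall (Y : topologicalType) (g : X -> Y),
    compact [set: Y] -> hausdorff_space Y -> continuous g ->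
    exists h : K -> Y, continuous h /\ (forall x, h (e x) = g x).

From HB Require Import structures.
From mathcomp Require Import all_boot all_order all_algebra.
From mathcomp Require Import all_classical all_reals all_analysis.
From mathcomp Require Import Rstruct Rstruct_topology finmap lra.
Import Order.TTheory GRing.Theory Num.Theory numFieldNormedType.Exports.
Local Open Scope classical_set_scope.

(* Extend f : X -> R along e to h : K -> R ∪ {∞}.  As K is compact and
   R ∪ {∞} Hausdorff, h is a perfect map, so preimages under h of Lindelöf
   sets are Lindelöf; every subset of the second-countable R is Lindelöf.
   Hence f⁻¹(S) is Lindelöf for S = R \ h(K \ X), since h⁻¹(S) lies inside X.
   Off f⁻¹(S), f takes its values in h(K \ X): one value in (a), countably
   many in (b), each attained at a single extra point of X. *)

(* [compact_cover] is only available for pointed spaces. *)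
Definition pointed_at {T : topologicalType} (t : T) : Type := T.
HB.instance Definition _ (T : topologicalType) (t : T) :=
  Topological.copy (pointed_at t) T.
HB.instance Definition _ (T : topologicalType) (t : T) :=
  isPointed.Build (pointed_at t) t.

Section lindelof.
Context {T : topologicalType}.
Implicit Types A B : set T.

Lemma lindelof_bigcup (I : Type) (D : set I) (A : I -> set T) :
  countable D -> (forall i, D i -> lindelof (A i)) ->
  lindelof (\bigcup_(i in D) A i).
Proof.
move=> cD LA J U oU cov.
have /choice[K HK] : forall i, exists K : set J,
    countable K /\ (D i -> A i `<=` \bigcup_(j in K) U j).
  move=> i; have [Di|nDi] := pselect (D i); last by exists set0.
  have [|K [cK AK]] := LA i Di J U oU; last by exists K.
  by move=> x Ax; apply: cov; exists i.
exists (\bigcup_(i in D) K i); split.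
  by apply: bigcup_countable => // i _; exact: (HK i).1.
by move=> x [i Di /((HK i).2 Di)[j Kj Uj]]; exists j => //; exists i.
Qed.

Lemma lindelofU A B : lindelof A -> lindelof B -> lindelof (A `|` B).
Proof.
move=> LA LB; rewrite -bigcup2E; apply: lindelof_bigcup => // -[|[|i]] _ //=.
by move=> I U _ _; exists set0; split.
Qed.

Lemma compact_lindelof A : compact A -> lindelof A.
Proof.
move=> cA I U oU cov.
have [[a Aa]|A0] := pselect (A !=set0); last first.
  by exists set0; split => // x Ax; case: A0; exists x.
have : @compact (pointed_at a) A by [].
rewrite compact_cover => /(_ {classic I} [set: {classic I}] U) [].
- by move=> i _; exact: oU.
- exact: cov.
move=> J _ AJ; exists [set` J]; split.
  exact/finite_set_countable/(finite_fset J).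
by move=> x /AJ[i Ji Ui]; exists i.
Qed.

Lemma countable_lindelof A : countable A -> lindelof A.
Proof.
move=> cA; rewrite -(image_id A) -bigcup_imset1.
apply: lindelof_bigcup => // x _; exact/compact_lindelof/compact_set1.
Qed.

Lemma second_countable_lindelof A : @second_countable T -> lindelof A.
Proof.
move=> [B cB [oB Bnbhs]] I U oU cov.
have /choice[J HJ] : forall b : set T, exists J : set I,
    [/\ countable J, J `<=` [set i | b `<=` U i] &
        (exists i, b `<=` U i) -> J !=set0].
  move=> b; have [[i bU]|nbU] := pselect (exists i, b `<=` U i).
    by exists [set i]; split => [||_]; [exact: countable1|move=> _ ->|exists i].
  by exists set0; split => // ?.
exists (\bigcup_(b in B) J b); split.
  by apply: bigcup_countable => // b _; have [] := HJ b.
move=> x /cov[i _ Uix].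
have [b [Bb bx] bU] := Bnbhs x (U i) (open_nbhs_nbhs (conj (oU i) Uix)).
have [_ JU /(_ (ex_intro _ i bU))[j Jj]] := HJ b.
by exists j; [exists b | exact: JU j Jj x bx].
Qed.

End lindelof.

Lemma second_countable_real (R : realType) : @second_countable R.
Proof.
pose ratball (qr : rat * rat) : set R := ball (ratr qr.1 : R) (ratr qr.2 : R).
exists (ratball @` [set qr | (0 < qr.2)%R]).
  exact/(sub_countable (card_image_le _ _))/countableP.
split=> [_ [qr _ <-]|x A /nbhs_ballP[e /= e0 xeA]]; first exact: ball_open.
have /rat_in_itvoo[r] : (0 < e / 2 :> R)%R by rewrite divr_gt0.
rewrite in_itv /= => /andP[r0 re].
have /rat_in_itvoo[q] : (x - ratr r < x + ratr r :> R)%R by lra.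
rewrite in_itv /= => /andP[xq qx].
exists (ratball (q, r)).
  split; first by exists (q, r); rewrite //= -(ltr0q R).
  by rewrite /ratball /ball /= ltr_distl; apply/andP; split; lra.
move=> y; rewrite /ratball /ball /= ltr_distl => /andP[qy yq].
by apply: xeA; rewrite /ball /= ltr_distl; apply/andP; split; lra.
Qed.

Lemma lindelof_image (S T : topologicalType) (g : S -> T) (A : set S) :
  continuous g -> lindelof A -> lindelof (g @` A).
Proof.
move=> cg LA I U oU cov.
have oUg i : open (g @^-1` U i) by apply: open_comp => // x _; exact: cg.
have [J [cJ AJ]] := LA I _ oUg (fun x Ax => cov (g x) (imageP g Ax)).
by exists J; split => // _ [x /AJ[i Ji Ui] <-]; exists i.
Qed.

Lemma lindelof_embedding_preimage (X K : topologicalType) (e : X -> K)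
    (A : set K) :
  embedding e -> A `<=` range e -> lindelof A -> lindelof (e @^-1` A).
Proof.
move=> [_ [ie oe]] Ae LA I U oU cov.
have /choice[V HV] := fun i => oe (U i) (oU i).
have eUV i x : U i x <-> V i (e x).
  split=> [Uix|Vix].
    by have [] : (range e `&` V i) (e x) by rewrite -(HV i).2; exists x.
  have : (e @` U i) (e x) by rewrite (HV i).2; split => //; exists x.
  by case=> y Uy /ie <-.
have [J [cJ AJ]] : exists J : set I, countable J /\ A `<=` \bigcup_(i in J) V i.
  apply: LA => [i|_ /[dup] /Ae[x _ <-] /cov[i _ /eUV]]; first exact: (HV i).1.
  by exists i.
by exists J; split => // x /AJ[i Ji /eUV]; exists i.
Qed.

Lemma lindelof_preimage_compact (K Y : topologicalType) (h : K -> Y)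
    (S : set Y) :
  compact [set: K] -> hausdorff_space Y -> continuous h ->
  lindelof S -> lindelof (h @^-1` S).
Proof.
move=> cK hY ch LS I U oU cov.
have closed_image C : closed C -> closed (h @` C).
  move=> cC; apply: compact_closed hY _; apply: continuous_compact.
    exact: continuous_subspaceT.
  exact: subclosed_compact cC cK _.
have /choice[J HJ] : forall y, exists J : set I, countable J /\
    (S y -> h @^-1` [set y] `<=` \bigcup_(i in J) U i).
  move=> y; have [Sy|nSy] := pselect (S y); last by exists set0.
  have fibre_closed : closed (h @^-1` [set y]).
    apply: preimage_closed; first by move=> k _; exact: ch.
    exact: accessible_closed_set1 (hausdorff_accessible hY) _.
  have /compact_lindelof LF := subclosed_compact fibre_closed cK (@subsetT _ _).
  have [|J [cJ FJ]] := LF I U oU; last by exists J.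
  by move=> k /= hk; apply: cov; rewrite /= hk.
pose W y := \bigcup_(i in J y) U i.
(* Since h is closed, the points whose whole fibre lies in [W y] form an open
   neighbourhood of each [y] in [S]. *)
have oN y : open (~` (h @` ~` W y)).
  by apply/closed_openC/closed_image/open_closedC/bigcup_open => i _.
have SN : S `<=` \bigcup_y ~` (h @` ~` W y).
  by move=> y Sy; exists y => // -[k nWk hky]; exact: nWk ((HJ y).2 Sy k hky).
have [T [cT ST]] := LS Y _ oN SN.
exists (\bigcup_(t in T) J t); split.
  by apply: bigcup_countable => // t _; exact: (HJ t).1.
move=> k /ST[t Tt Nt].
have [i Ji Uik] : W t k by apply: contrapT => nWk; apply: Nt; exists k.
by exists i => //; exists t.
Qed.

Lemma countable_section {T U : Type} (g : T -> U) (D : set U) :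
  countable D -> exists2 Z : set T, countable Z & g @` Z = D `&` range g.
Proof.
move=> cD.
have /choice[Z HZ] : forall d, exists Z : set T,
    countable Z /\ g @` Z = [set d] `&` range g.
  move=> d; have [[x _ gx]|nd] := pselect (range g d).
    exists [set x]; split; first exact: countable1.
    rewrite image_set1 gx; apply/seteqP; split=> [_ ->|_ [-> //]].
    by split=> //; exists x.
  exists set0; split => //; rewrite image_set0.
  by apply/seteqP; split => // _ [-> /nd].
exists (\bigcup_(d in D) Z d).
  by apply: bigcup_countable => // d _; exact: (HZ d).1.
apply/seteqP; split=> [_ [x [d Dd Zdx] <-]|u [Du [x _ gx]]].
  have : (g @` Z d) (g x) by exists x.
  by rewrite (HZ d).2 => -[-> rgx].
have : ([set u] `&` range g) u by split => //; exists x.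
by rewrite -(HZ u).2 => -[z Zz <-]; exists z => //; exists u.
Qed.

Section stone_cech_remainder.
Context {X K Y : topologicalType} {e : X -> K}.
Hypotheses (sce : is_stone_cech e) (Ylc : locally_compact [set: Y])
  (Yhaus : hausdorff_space Y) (Ysc : @second_countable Y).

Let opcY_hausdorff : hausdorff_space (one_point_compactification Y).
Proof. exact: one_point_compactification_hausdorff. Qed.

Lemma stone_cech_extend_opc {f : X -> Y} : continuous f ->
  exists2 h : K -> one_point_compactification Y,
    continuous h & forall x, h (e x) = Some (f x).
Proof.
have [_ [_ [_ [_ ext]]]] := sce; move=> cf.
have [|h [ch hef]] := ext (one_point_compactification Y) (Some \o f)
  one_point_compactification_compact opcY_hausdorff; last by exists h.
move=> x; apply: continuous_comp (cf x) _.
exact: one_point_compactification_some_continuous.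
Qed.

Lemma lindelof_preimage_off_remainder (f : X -> Y)
    (h : K -> one_point_compactification Y) :
  continuous h -> (forall x, h (e x) = Some (f x)) ->
  lindelof [set x | ~ (h @` ~` range e) (Some (f x))].
Proof.
have [cK [_ [emb _]]] := sce; move=> ch hef.
pose S := [set y : Y | ~ (h @` ~` range e) (Some y)].
have LS : lindelof (h @^-1` (Some @` S)).
  apply: lindelof_preimage_compact => //.
  apply: lindelof_image; last exact: second_countable_lindelof.
  exact: one_point_compactification_some_continuous.
have in_range_e : h @^-1` (Some @` S) `<=` range e.
  by move=> k [y Sy hky]; apply: contrapT => nek; apply: Sy; exists k.
suff <- : e @^-1` (h @^-1` (Some @` S)) = [set x | S (f x)].
  exact: lindelof_embedding_preimage.
apply/seteqP; split=> x /=; rewrite hef; last by exists (f x).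
by case=> y Sy [<-].
Qed.

Lemma EC_stone_cech_remainder1 : (exists p, ~` range e = [set p]) -> EC X Y.
Proof.
move=> [p Rp] nL f cf; have [h ch hef] := stone_cech_extend_opc cf.
set Z := [set x | ~ (h @` ~` range e) (Some (f x))].
have offZ x : ~ Z x -> Some (f x) = h p.
  by rewrite /Z Rp image_set1 => /contrapT.
have LZ : lindelof Z by exact: lindelof_preimage_off_remainder.
exists Z; split => //.
have [[x0 Zx0]|allZ] := pselect (exists x, ~ Z x); last first.
  case: nL; suff -> : [set: X] = Z by [].
  apply/seteqP; split => x // _.
  by apply: contrapT => nZx; apply: allZ; exists x.
exists (f x0); apply/seteqP; split=> [_ [x /offZ fx <-]|_ ->]; last first.
  by exists x0.
by move: fx; rewrite -(offZ _ Zx0) => -[].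
Qed.

Lemma Lprop_stone_cech_remainder_countable :
  countable (~` range e) -> Lprop X Y.
Proof.
move=> cR nL f cf; have [h ch hef] := stone_cech_extend_opc cf.
set Z := [set x | ~ (h @` ~` range e) (Some (f x))].
have [Z' cZ' Z'D] := countable_section (fun x => Some (f x)) _
  (sub_countable (card_image_le h _) cR).
exists (Z `|` Z'); split.
  apply: lindelofU; first exact: lindelof_preimage_off_remainder.
  exact: countable_lindelof.
apply/seteqP; split=> [_ [x _ <-]|_ [x _ <-]]; first by exists x.
have [Zx|/contrapT nZx] := pselect (Z x); first by exists x => //; left.
have : ((h @` ~` range e) `&` range (fun x => Some (f x))) (Some (f x)).
  by split => //; exists x.
by rewrite -Z'D => -[z Z'z [fz]]; exists z; [right|].
Qed.

End stone_cech_remainder.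

Theorem theorem2p6 (X : topologicalType) (hX : tychonoff_space X) :
  (forall (K : topologicalType) (e : X -> K), is_stone_cech e ->
     (exists p : K, ~` range e = [set p]) ->
     EC X Rdefinitions.R) /\
  (forall (K : topologicalType) (e : X -> K), is_stone_cech e ->
     countable (~` range e) -> locally_compact [set: X] ->
     Lprop X Rdefinitions.R).
Proof.
have Rlc := @locally_compactR Rdefinitions.R.
have Rhaus := @Rhausdorff Rdefinitions.R.
have Rsc := second_countable_real Rdefinitions.R.
split=> K e sce; first exact: (EC_stone_cech_remainder1 sce Rlc Rhaus Rsc).
by move=> cR _; exact: (Lprop_stone_cech_remainder_countable sce Rlc Rhaus Rsc).
Qed.
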